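(* Let $l:\mathbb{Z}^2\to\mathcal{L}^4_0$ be a principal contact element net with one family of spherical parameter lines $\{l_{i,j}\}_{i\in\mathbb{Z}}$. Then for any $j_0,j_1\in\mathbb{Z}$ there is a projective transformation $f_{j_0,j_1}:\bigvee_i l_{i,j_0}\to\bigvee_i l_{i,j_1}$ such that $f_{j_0,j_1}(l_{i,j_0})=l_{i,j_1}$ for all $i\in\mathbb{Z}$.
   Context: Let $e_1,\dots,e_6$ be an orthonormal basis of $\mathbb{R}^{4,2}$ with $\langle e_i,e_i\rangle=1$ for $i\le4$ and $\langle e_5,e_5\rangle=\langle e_6,e_6\rangle=-1$. The Lie quadric is $\mathcal{L}^4=\{[x]\in\mathbb{R}\mathrm{P}^5:\langle x,x\rangle=0\}$ and $\mathcal{L}^4_0$ the set of lines contained in $\mathcal{L}^4$. A principal contact element net is a map $l:\mathbb{Z}^2\to\mathcal{L}^4_0$ such that neighbouring lines ($l_{i,j},l_{i+1,j}$ and $l_{i,j},l_{i,j+1}$) intersect. $\bigvee$ denotes projective span. The net has one family of spherical parameter lines $\{l_{i,j}\}_{i\in\mathbb{Z}}$ if for every $j$ the span $\bigvee_i l_{i,j}$ is $4$-dimensional and the planes $\{l_{i,j}\vee l_{i,j+1}\}_{i\in\mathbb{Z}}$ are concurrent (have a common point). Standing assumption: all data are generic (in general position subject to the stated constraints). *)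

(* R^{4,2} = row vectors 'rV[R]_6 over a realType R;
   linear subspaces are represented by the row spaces of 6x6 matrices (mxalgebra). *)
From HB Require Import structures.
From mathcomp Require Import all_boot all_order all_algebra.
From mathcomp Require Import reals.
Set Implicit Arguments. Unset Strict Implicit. Unset Printing Implicit Defensive.
Import Order.TTheory GRing.Theory Num.Theory.
Local Open Scope ring_scope.

Section LieGeometry.
Variable R : realType.

Definition lie_gram : 'M[R]_6 :=
  diag_mx (\row_(k < 6) (if (k < 4)%N then 1 else -1)).

(* A projective line of RP^5 (= 2-dim linear subspace, the row space of A)
   contained in the Lie quadric, i.e. totally isotropic. *)
Definition lie_line (A : 'M[R]_6) : Prop :=
  \rank A = 2%N /\ A *m lie_gram *m A^T = 0.

Definition meet_nontrivially (A B : 'M[R]_6) : Prop := (0 < \rank (A :&: B)%MS)%N.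

Definition contact_element_net (l : int -> int -> 'M[R]_6) : Prop :=
  (forall i j, lie_line (l i j)) /\
  (forall i j, meet_nontrivially (l i j) (l (i + 1) j)) /\
  (forall i j, meet_nontrivially (l i j) (l i (j + 1))).

Definition is_span (L : int -> 'M[R]_6) (S : 'M[R]_6) : Prop :=
  (forall i, (L i <= S)%MS) /\
  (forall T : 'M[R]_6, (forall i, (L i <= T)%MS) -> (S <= T)%MS).

Definition common_point (l : int -> int -> 'M[R]_6) (j : int) (p : 'rV[R]_6) : Prop :=
  p != 0 /\ forall i, (p <= l i j + l i (j + 1)%R)%MS.

Definition spherical_family (l : int -> int -> 'M[R]_6) : Prop :=
  (forall j, exists S, is_span (fun i => l i j) S /\ \rank S = 5%N) /\
  (forall j, exists p, common_point l j p).

(* Genericity (standing assumption): the point of concurrency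
   of the planes l_{i,j} \/ l_{i,j+1} can be chosen off the spans
   \bigvee_i l_{i,j} and \bigvee_i l_{i,j+1}. *)
Definition generic_concurrency (l : int -> int -> 'M[R]_6) : Prop :=
  forall j, exists p, common_point l j p /\
    (forall S, is_span (fun i => l i j) S -> ~~ (p <= S)%MS) /\
    (forall S, is_span (fun i => l i (j + 1)) S -> ~~ (p <= S)%MS).

(* f is (a linear map inducing) a projective transformation from the
   projective subspace S0 onto S1 (a linear isomorphism S0 -> S1). *)
Definition proj_transf_between (F S0 S1 : 'M[R]_6) : Prop :=
  (S0 *m F == S1)%MS /\ \rank (S0 *m F) = \rank S0.

End LieGeometry.

From HB Require Import structures.
From mathcomp Require Import all_boot all_order all_algebra.
From mathcomp Require Import reals.
From mathcomp Require Import zify.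
Set Implicit Arguments. Unset Strict Implicit.
Import Order.TTheory GRing.Theory Num.Theory.
Local Open Scope ring_scope.

(* Fix j and a point p off the spans S_j and S_{j+1}, which are hyperplanes
   (rank 5). The central projection from p onto S_{j+1} maps the line l_{i,j}
   into the plane l_{i,j} + l_{i,j+1} through p, hence into the trace of that
   plane on S_{j+1}, which is the line l_{i,j+1}; being injective on lines
   missing p, it maps l_{i,j} onto l_{i,j+1}. Projecting onto S_j instead
   gives the inverse direction, and composing such maps along the integers
   from j0 to j1 carries every l_{i,j0} onto l_{i,j1}. Since S_{j0} and S_{j1}
   have the same rank, the composite then maps S_{j0} onto S_{j1}. *)

Section CentralProjection.
Variables (F : fieldType) (n : nat) (H : 'M[F]_n.+1) (p : 'rV[F]_n.+1).
Hypotheses (rankH : \rank H = n) (pNH : ~~ (p <= H)%MS).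

Lemma hyperplane_addsmx_full m (X : 'M_(m, n.+1)) :
  ~~ (X <= H)%MS -> row_full (H + X)%MS.
Proof.
move=> XNH; have : (H < H + X)%MS.
  by rewrite ltmxE addsmxSl addsmx_sub submx_refl (negbTE XNH).
by rewrite ltmxErank rankH => /andP[_]; rewrite /row_full eqn_leq rank_leq_col.
Qed.

Lemma mxrank_cap_hyperplane m (A : 'M_(m, n.+1)) :
  (p <= A)%MS -> (\rank (A :&: H)).+1 = \rank A.
Proof.
move=> pA; have ANH : ~~ (A <= H)%MS by apply: contra pNH; apply: submx_trans.
have := mxrank_sum_cap H A.
by rewrite capmxC (eqP (hyperplane_addsmx_full ANH)) rankH addSnnS => /addnI.
Qed.

Definition central_proj : 'M[F]_n.+1 := proj_mx H <<p>>%MS.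

Lemma central_proj_compl m (A : 'M_(m, n.+1)) :
  (A - A *m central_proj <= p)%MS.
Proof.
rewrite -(genmxE p); apply/proj_mx_compl_sub/submx_full.
by apply: hyperplane_addsmx_full; rewrite genmxE.
Qed.

Lemma central_proj_decomp m (A : 'M_(m, n.+1)) :
  (A <= A *m central_proj + p)%MS.
Proof.
have := addmx_sub_adds (submx_refl (A *m central_proj)) (central_proj_compl A).
by rewrite addrCA subrr addr0.
Qed.

Lemma mxrank_central_proj m (A : 'M_(m, n.+1)) :
  ~~ (p <= A)%MS -> \rank (A *m central_proj) = \rank A.
Proof.
move=> pNA; apply/eqP; rewrite eqn_leq mxrankM_maxl /=.
have : (A < A + p)%MS.
  by rewrite ltmxE addsmxSl addsmx_sub submx_refl (negbTE pNA).
rewrite ltmxErank => /andP[_ ltA].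
have AP_p : (A + p <= A *m central_proj + p)%MS.
  by rewrite addsmx_sub addsmxSr central_proj_decomp.
have [le_sum _] := mxrank_adds_leqif (A *m central_proj) p.
have := mxrankS AP_p; have := rank_leq_row p; lia.
Qed.

Lemma central_proj_line (A B : 'M_n.+1) :
  (B <= H)%MS -> (p <= A + B)%MS -> ~~ (p <= A)%MS -> \rank A = \rank B ->
  (\rank A <= (\rank (A :&: B)).+1)%N -> (A *m central_proj == B)%MS.
Proof.
move=> BH pAB pNA rAB meetAB.
(* X is a hyperplane section of a space through p, so it has rank
   \rank (A + B) - 1 <= \rank B, and it contains B. *)
set X := ((A + B) :&: H)%MS.
have BX : (B <= X)%MS by rewrite sub_capmx addsmxSr BH.
have /andP[_ XB] : (B == X)%MS.
  have rX := mxrank_cap_hyperplane pAB; have := mxrank_sum_cap A B.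
  have [_ <-] := mxrank_leqif_eq BX; rewrite eqn_leq mxrankS //=.
  rewrite -/X in rX; lia.
have APX : (A *m central_proj <= X)%MS.
  rewrite sub_capmx proj_mx_sub andbT -[X in (X <= _)%MS](subKr A).
  rewrite addmx_sub ?addsmxSl // eqmx_opp.
  exact: submx_trans (central_proj_compl A) pAB.
have [_ <-] := mxrank_leqif_eq (submx_trans APX XB).
by rewrite mxrank_central_proj // rAB.
Qed.

End CentralProjection.

Section CarriedFamilies.
Variables (F : fieldType) (n : nat).

Definition carried_onto (A B : int -> 'M[F]_n) : Prop :=
  exists M : 'M_n, forall i, (A i *m M == B i)%MS.

Lemma carried_onto_refl A : carried_onto A A.
Proof. by exists 1%:M => i; rewrite mulmx1 andbb submx_refl. Qed.

Lemma carried_onto_trans A B C :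
  carried_onto A B -> carried_onto B C -> carried_onto A C.
Proof.
move=> [M AB] [N BC]; exists (M *m N) => i; rewrite mulmxA.
exact/eqmxP/(eqmx_trans (eqmxMr N (eqmxP (AB i))) (eqmxP (BC i))).
Qed.

End CarriedFamilies.

Lemma lines_carried_by_central_proj (F : fieldType) (n : nat)
    (A B : int -> 'M[F]_n.+1) (H : 'M_n.+1) (p : 'rV_n.+1) :
  \rank H = n -> ~~ (p <= H)%MS -> (forall i, B i <= H)%MS ->
  (forall i, ~~ (p <= A i)%MS) -> (forall i, p <= A i + B i)%MS ->
  (forall i, \rank (A i) = 2%N) -> (forall i, \rank (B i) = 2%N) ->
  (forall i, 0 < \rank (A i :&: B i))%N ->
  carried_onto A B.
Proof.
move=> rH pNH BH pNA pAB rA rB meet; exists (central_proj H p) => i.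
by apply: central_proj_line; rewrite ?rA ?rB //; have := meet i; lia.
Qed.

Lemma int_adjacent_connect (P : int -> int -> Prop) :
  (forall j, P j j) -> (forall a b c, P a b -> P b c -> P a c) ->
  (forall j, P j (j + 1) /\ P (j + 1) j) -> forall j0 j1, P j0 j1.
Proof.
move=> refl trans adj.
have shift (k : nat) j : P j (j + k%:Z) /\ P (j + k%:Z) j.
  elim: k => [|k [fwd bwd]]; first by rewrite addr0.
  have [fwd1 bwd1] := adj (j + k%:Z).
  rewrite -addn1 PoszD addrA.
  by split; [exact: trans fwd fwd1 | exact: trans bwd1 bwd].
have shift_diff a b : a <= b -> a + `|b - a|%N = b.
  by move=> le_ab; rewrite gez0_abs ?subr_ge0 // addrCA subrr addr0.
move=> j0 j1; have [le01|lt10] := lerP j0 j1.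
  by rewrite -(shift_diff _ _ le01); apply: (shift _ _).1.
by rewrite -(shift_diff _ _ (ltW lt10)); apply: (shift _ _).2.
Qed.

Section SphericalNets.
Variable R : realType.

Lemma is_span_eqmx (L : int -> 'M[R]_6) S S' :
  is_span L S -> is_span L S' -> (S == S')%MS.
Proof. by move=> [sub min] [sub' min']; rewrite (min _ sub') (min' _ sub). Qed.

Lemma is_span_mulmx_onto (A B : int -> 'M[R]_6) S0 S1 M :
  is_span A S0 -> is_span B S1 -> (forall i, A i *m M == B i)%MS ->
  \rank S0 = \rank S1 -> proj_transf_between M S0 S1.
Proof.
move=> [subA _] [_ minB] AB rS.
have S1M : (S1 <= S0 *m M)%MS.
  apply: minB => i; have /andP[_ BA] := AB i.
  exact: submx_trans BA (submxMr M (subA i)).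
have rM : \rank (S0 *m M) = \rank S1.
  by apply/eqP; rewrite eqn_leq (mxrankS S1M) andbT -rS mxrankM_maxl.
split; last by rewrite rM.
have [_] := mxrank_leqif_eq S1M; rewrite rM eqxx => /esym/andP[? ?].
exact/andP.
Qed.

Lemma spherical_span_rank (l : int -> int -> 'M[R]_6) j S :
  spherical_family l -> is_span (fun i => l i j) S -> \rank S = 5%N.
Proof.
move=> [spans _] spS; have [S' [spS' rS']] := spans j.
by rewrite (eqmx_rank (is_span_eqmx spS spS')).
Qed.

Lemma spherical_net_adjacent_carried (l : int -> int -> 'M[R]_6) j :
  contact_element_net l -> spherical_family l -> generic_concurrency l ->
  carried_onto (fun i => l i j) (fun i => l i (j + 1)) /\
  carried_onto (fun i => l i (j + 1)) (fun i => l i j).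
Proof.
move=> [lines [_ meet]] [spans _] gen.
have [p [[_ pl] [pNS0 pNS1]]] := gen j.
have [S0 [sp0 r0]] := spans j; have [S1 [sp1 r1]] := spans (j + 1).
have pNl k S : is_span (fun i => l i k) S -> ~~ (p <= S)%MS ->
    forall i, ~~ (p <= l i k)%MS.
  by move=> [sub _] pNS i; apply: contra pNS => /submx_trans; apply.
have rl k i : \rank (l i k) = 2%N by case: (lines i k).
split.
  apply: (lines_carried_by_central_proj r1 (pNS1 _ sp1) sp1.1) => // i.
  - exact: pNl sp0 (pNS0 _ sp0) i.
  - exact: meet.
apply: (lines_carried_by_central_proj r0 (pNS0 _ sp0) sp0.1) => // i.
- exact: pNl sp1 (pNS1 _ sp1) i.
- by rewrite addsmxC.
- by rewrite capmxC; apply: meet.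
Qed.

End SphericalNets.

Unset Implicit Arguments.

Theorem proposition5p5 (R : realType) (l : int -> int -> 'M[R]_6) :
  contact_element_net l ->
  spherical_family l ->
  generic_concurrency l ->
  forall (j0 j1 : int) (S0 S1 : 'M[R]_6),
    is_span (fun i => l i j0) S0 ->
    is_span (fun i => l i j1) S1 ->
    exists F : 'M[R]_6,
      proj_transf_between F S0 S1 /\
      (forall i : int, (l i j0 *m F == l i j1)%MS).
Proof.
move=> net sph gen j0 j1 S0 S1 sp0 sp1.
have [M carry] : carried_onto (fun i => l i j0) (fun i => l i j1).
  apply: (int_adjacent_connect
    (P := fun a b => carried_onto (fun i => l i a) (fun i => l i b))).
  - by move=> j; apply: carried_onto_refl.
  - by move=> a b c; apply: carried_onto_trans.
  - by move=> j; apply: spherical_net_adjacent_carried.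
exists M; split=> //; apply: (is_span_mulmx_onto sp0 sp1 carry).
by rewrite (spherical_span_rank sph sp0) (spherical_span_rank sph sp1).
Qed.
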